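(* Let $P$ be a probability measure on a measurable space $(\Omega,\mathcal{M})$. Let $\Lambda:[0,\infty)\to[0,\infty]$ satisfy $\Lambda(0)=0$, be finite on a neighborhood of $0$, and be differentiable from the right at $0$ with right-derivative $\eta$. Then $$\mathcal{U}^\Lambda(P)\subset\{Q:\ R(Q\|P)\le\eta\}.$$
   Context: For probability measures $P,Q$ on $(\Omega,\mathcal{M})$, the relative entropy is $R(Q\|P)=\int\log(dQ/dP)\,dQ$ if $Q\ll P$ and $+\infty$ otherwise. For a probability measure $Q$ and a measurable $f:\Omega\to\overline{\mathbb{R}}$, the cumulant generating function is $\Lambda_Q^f(\lambda)=\log E_Q[e^{\lambda f}]$. For $\Lambda:[0,\infty)\to[0,\infty]$ with $\Lambda(0)=0$ and finite on a neighborhood of $0$, the ambiguity set is $\mathcal{U}^\Lambda(P)=\{Q \text{ probability measure}: Q\ll P,\ \Lambda_Q^{\log(dQ/dP)}(\lambda)\le\Lambda(\lambda)\ \text{for all }\lambda>0\}$. *)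

From HB Require Import structures.
From mathcomp Require Import all_boot all_order all_algebra.
From mathcomp Require Import all_classical all_reals all_analysis.
Set Implicit Arguments. Unset Strict Implicit. Unset Printing Implicit Defensive.
Import Order.TTheory GRing.Theory Num.Theory.
Local Open Scope classical_set_scope.
Local Open Scope ring_scope.
Local Open Scope ereal_scope.

(* Radon-Nikodym derivative dQ/dP of a probability Q w.r.t. a probability P
   (meaningful when Q `<< P; defined P-a.e., hence Q-a.e.). *)
Definition dens d (T : measurableType d) (R : realType)
  (P Q : probability T R) : T -> \bar R :=
  Radon_Nikodym (charge_of_finite_measure Q) P.

(* log-likelihood ratio log(dQ/dP), with log t = -oo for t <= 0 *)
Definition loglr d (T : measurableType d) (R : realType)
  (P Q : probability T R) : T -> \bar R := fun x => lne (dens P Q x).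

Definition relent d (T : measurableType d) (R : realType)
  (Q P : probability T R) : \bar R :=
  if pselect (Q `<< P) then \int[Q]_x loglr P Q x else +oo.

Definition cgf d (T : measurableType d) (R : realType)
  (Q : probability T R) (f : T -> \bar R) (l : R) : \bar R :=
  lne (\int[Q]_x expeR (l%:E * f x)).

Definition ambiguity_set d (T : measurableType d) (R : realType)
  (Lam : R -> \bar R) (P : probability T R) : set (probability T R) :=
  [set Q : probability T R | Q `<< P /\ forall l : R, (0 < l)%R -> cgf Q (loglr P Q) l <= Lam l].

From HB Require Import structures.
From mathcomp Require Import all_boot all_order all_algebra.
From mathcomp Require Import all_classical all_reals all_analysis measurable_realfun.
From mathcomp Require Import ring.
Import Order.TTheory GRing.Theory Num.Theory numFieldNormedType.Exports.
Local Open Scope classical_set_scope.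
Local Open Scope ring_scope.

(* Write f := log(dQ/dP) and I := E_Q[f] = R(Q||P).  Jensen's inequality,
   in the form of the tangent line of exp at l I, gives
   l I <= log E_Q[exp(l f)] <= Lam(l) for every l > 0.  Finiteness of Lam
   near 0 rules out I = +oo, and then I <= Lam(l)/l --> eta as l --> 0+. *)

Section pointwise_expeR_bounds.
Local Open Scope ereal_scope.
Variable R : realType.

Lemma expeR_ge_tangent (l r : R) (x : \bar R) : (0 < l)%R ->
  (expR (l * r) * (1 - l * r))%:E + (expR (l * r) * l)%:E * x
    <= expeR (l%:E * x).
Proof.
move=> l0; case: x => [s||] /=.
- rewrite -EFinM -EFinD lee_fin.
  have := expR_ge1Dx (l * s - l * r).
  rewrite expRB ler_pdivlMr ?expR_gt0 //; apply: le_trans.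
  by rewrite le_eqVlt; apply/predU1l; ring.
- by rewrite !gt0_muley ?lte_fin ?mulr_gt0 ?expR_gt0.
- by rewrite gt0_muleNy ?lte_fin ?mulr_gt0 ?expR_gt0 // addeNy leNye.
Qed.

Lemma expeR_ge_scale_maxe (l : R) (x : \bar R) : (0 < l)%R ->
  l%:E * maxe x 0 <= expeR (l%:E * x).
Proof.
move=> l0; case: x => [s||] /=.
- rewrite -EFin_max -EFinM lee_fin.
  have [s0|s0] := leP s 0%R; first by rewrite mulr0 expR_ge0.
  by apply: le_trans (expR_ge1Dx _); rewrite lerDr.
- by rewrite maxye !gt0_muley ?lte_fin.
- by rewrite maxNye mule0 expeR_ge0.
Qed.

End pointwise_expeR_bounds.

Section measurability.
Local Open Scope ereal_scope.
Context {d : measure_display} {T : measurableType d} {R : realType}.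

Lemma measurable_dens {P Q : probability T R} : Q `<< P ->
  measurable_fun [set: T] (dens P Q).
Proof.
move=> QP.
have := @Radon_Nikodym_integrable _ _ _ (charge_of_finite_measure Q) P QP.
by case/integrableP.
Qed.

Lemma measurable_loglr {P Q : probability T R} : Q `<< P ->
  measurable_fun [set: T] (loglr P Q).
Proof.
move=> /measurable_dens md.
rewrite (_ : loglr P Q = fun x => if dens P Q x <= 0 then -oo
   else er_map (@ln R) (dens P Q x)); last first.
  apply: funext => x; rewrite /loglr; case: (dens P Q x) => [r||] /=.
  - by rewrite lee_fin; case: ifP.
  - by [].
  - by case: ifP.
apply: measurable_fun_ifT => //.
- apply: (measurable_fun_bool true).
  have := emeasurable_fun_infty_c measurableT md 0; rewrite setTI.
  by congr measurable; apply/seteqP; split.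
- exact: (measurableT_comp (@measurable_er_map _ T R _ (@measurable_ln R)) md).
Qed.

Lemma measurable_expeR_scale (f : T -> \bar R) (l : R) :
  measurable_fun [set: T] f ->
  measurable_fun [set: T] (fun x => expeR (l%:E * f x)).
Proof.
move=> /(measurable_funeM l%:E) mlf.
rewrite (_ : (fun x => _) = fun x => if l%:E * f x != -oo then
    er_map (@expR R) (l%:E * f x) else 0); last first.
  by apply: funext => x; case: (l%:E * f x).
apply: measurable_fun_ifT => //.
- apply: (measurable_fun_bool true).
  have := emeasurable_neq measurableT mlf (-oo); rewrite setTI.
  by congr measurable; apply/seteqP; split.
- exact: (measurableT_comp (@measurable_er_map _ T R _ (@measurable_expR R)) mlf).
Qed.

End measurability.

Section integral_lemmas.
Local Open Scope ereal_scope.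
Context {d : measure_display} {T : measurableType d} {R : realType}.

Lemma fin_num_integral_integrable (mu : measure T R) (D : set T)
    (f : T -> \bar R) : measurable D -> measurable_fun D f ->
  \int[mu]_(x in D) f x \is a fin_num -> mu.-integrable D f.
Proof.
move=> mD mf; rewrite integralE fin_numB => /andP[fpfin fnfin].
apply/integrableP; split => //.
rewrite (_ : (fun x => `|f x|) = f^\+ \+ f^\-); last by rewrite -fune_abse.
rewrite ge0_integralD //; last 2 first.
- exact: measurable_funepos.
- exact: measurable_funeneg.
rewrite -ge0_fin_numE; first by rewrite fin_numD fpfin fnfin.
by rewrite adde_ge0 // integral_ge0.
Qed.

Lemma integral_pinfty_funepos (mu : measure T R) (D : set T)
    (f : T -> \bar R) :
  \int[mu]_(x in D) f x = +oo -> \int[mu]_(x in D) f^\+ x = +oo.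
Proof.
rewrite integralE.
have : 0 <= \int[mu]_(x in D) f^\- x by apply: integral_ge0.
by case: (\int[mu]_(x in D) f^\+ x); case: (\int[mu]_(x in D) f^\- x).
Qed.

Variable Q : probability T R.

(* Jensen's inequality for exp(l .): integrate the tangent line of
   exp(l .) at the mean r, whose integral is exactly exp(l r). *)
Lemma expR_scale_mean_le (f : T -> \bar R) (l r : R) : (0 < l)%R ->
  Q.-integrable [set: T] f -> \int[Q]_x f x = r%:E ->
  (expR (l * r))%:E <= \int[Q]_x expeR (l%:E * f x).
Proof.
move=> l0 intf intfE; set c := expR (l * r).
set g := fun x => (c * (1 - l * r))%:E + (c * l)%:E * f x.
have intc := finite_measure_integrable_cst Q (c * (1 - l * r)) measurableT.
have intg : Q.-integrable [set: T] g.
  exact: integrableD intc (integrableZl measurableT (c * l) intf).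
have intgE : \int[Q]_x g x = c%:E.
  rewrite integralD ?integral_cst ?integralZl ?intfE //;
    last exact: integrableZl.
  transitivity ((c * (1 - l * r))%:E * 1 + (c * l)%:E * r%:E).
    by congr (_ * _ + _); exact: probability_setT.
  by rewrite mule1 -EFinM -EFinD; congr EFin; ring.
rewrite -intgE integralE; apply: le_trans (geeDl _ _) _.
  by rewrite oppe_le0 integral_ge0.
apply: ge0_le_integral => //.
- by apply: measurable_funepos; case/integrableP: intg.
- by apply: measurable_expeR_scale; case/integrableP: intf.
- by move=> x _; rewrite funeposE ge_max expeR_ge0 andbT expeR_ge_tangent.
Qed.

Lemma integral_expeR_scale_pinfty (f : T -> \bar R) (l : R) : (0 < l)%R ->
  measurable_fun [set: T] f -> \int[Q]_x f x = +oo ->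
  \int[Q]_x expeR (l%:E * f x) = +oo.
Proof.
move=> l0 mf /integral_pinfty_funepos fpE; apply/eqP; rewrite eq_le leey /=.
have -> : +oo = l%:E * \int[Q]_x f^\+ x by rewrite fpE gt0_muley ?lte_fin.
rewrite -ge0_integralZl_EFin ?(ltW l0) //; last exact: measurable_funepos.
apply: ge0_le_integral => //.
- by move=> x _; apply: mule_ge0; rewrite // lee_fin ltW.
- exact/measurable_funeM/measurable_funepos.
- exact: measurable_expeR_scale.
- by move=> x _; rewrite funeposE expeR_ge_scale_maxe.
Qed.

Lemma scale_integral_le_cgf (f : T -> \bar R) (l : R) : (0 < l)%R ->
  measurable_fun [set: T] f -> l%:E * \int[Q]_x f x <= cgf Q f l.
Proof.
move=> l0 mf; rewrite /cgf.
case intfE : (\int[Q]_x f x) => [r||].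
- rewrite -EFinM -[(l * r)%:E]expeRK.
  have int_ge0 : 0 <= \int[Q]_x expeR (l%:E * f x).
    by apply: integral_ge0 => x _; exact: expeR_ge0.
  rewrite lee_lne ?in_itv /= ?leey ?andbT ?lee_fin ?expR_ge0 ?int_ge0 //.
  have intf : Q.-integrable [set: T] f.
    by apply: fin_num_integral_integrable; rewrite // intfE.
  exact: expR_scale_mean_le.
- by rewrite integral_expeR_scale_pinfty //= leey.
- by rewrite gt0_muleNy ?lte_fin ?leNye.
Qed.

End integral_lemmas.

Theorem mainTheorem1 (d : measure_display) (T : measurableType d)
  (R : realType) (P : probability T R) (Lam : R -> \bar R) (eta : R) :
  (forall l : R, 0 <= l -> (0 <= Lam l)%E) ->
  Lam 0 = 0%E ->
  (exists e : R, 0 < e /\ forall l : R, 0 <= l < e -> (Lam l < +oo)%E) ->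
  (fun h : R => fine (Lam h) / h) @ 0^'+ --> eta ->
  ambiguity_set Lam P `<=` [set Q | (relent Q P <= eta%:E)%E].
Proof.
move=> Lam_ge0 _ [e [e0 Lam_fin]] Lam_slope Q [QP Lam_cgf] /=.
rewrite /relent; case: pselect => // _ /=.
have mf := measurable_loglr QP.
have mean_le l : 0 < l -> (l%:E * \int[Q]_x loglr P Q x <= Lam l)%E.
  by move=> l0; exact: le_trans (scale_integral_le_cgf Q _ _ l0 mf) (Lam_cgf l l0).
have Lam_fin_num l : 0 < l < e -> Lam l \is a fin_num.
  by move=> /andP[l0 le]; rewrite ge0_fin_numE ?Lam_fin ?Lam_ge0 ?ltW ?l0.
have half_e : 0 < e / 2 < e by rewrite divr_gt0 // ltr_pdivrMr // ltr_pMr // ltr1n.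
case intfE : (\int[Q]_x loglr P Q x)%E => [r||] in mean_le *; last first.
- by rewrite leNye.
- have := Lam_fin_num _ half_e; have := mean_le _ (andP half_e).1.
  by rewrite gt0_muley ?lte_fin ?divr_gt0 // leye_eq => /eqP ->.
rewrite lee_fin; apply: (cvgr_to_ge Lam_slope); near=> l.
have le0e : 0 < l < e by apply/andP; split; near: l;
  [exact: nbhs_right_gt | exact: nbhs_right_lt].
have := mean_le _ (andP le0e).1; rewrite -(fineK (Lam_fin_num _ le0e)) lee_fin.
by rewrite ler_pdivlMr ?(andP le0e).1 // mulrC.
Unshelve. all: by end_near.
Qed.
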